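(* Suppose $\psi_1(u)\le\psi_1(u')\exp(C_3|u-u'|)$ for all $u,u'\in\mathbb R$ (with $C_3\ge0$) and $\max_{0\le j\le q}|g_j(\bm X)|\le C_4$ a.s. Then for any $\alpha,\tilde\alpha\in\mathbb R^{q+1}$, with $b=\alpha-\tilde\alpha$ and $C_{40}=C_3C_4$, $$D^\dagger_{\rm WL}(\alpha^\top\bm G,\tilde\alpha^\top\bm G;\bar\gamma)\ge\{b^\top\tilde{\bm\Sigma}_\alpha(\tilde\alpha)b\}\frac{1-\exp(-C_{40}\|b\|_1)}{C_{40}\|b\|_1},$$ where $\tilde{\bm\Sigma}_\alpha(\tilde\alpha)=\tilde{\mathbb E}[Rw(\bm X;\bar\gamma)\psi_1(\tilde\alpha^\top\bm G)\bm G\bm G^\top]$, and $\{1-\exp(-c)\}/c$ is interpreted as $1$ when $c=0$.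
   Context: $\tilde{\mathbb E}$ is the sample mean over observations $(\bm X_i,Y_i,R_i)$ with $R_i\in\{0,1\}$. $\bm F$ and $\bm G=(g_0,\dots,g_q)^\top$ are vectors of functions of $\bm X$. $w(\bm X;\gamma)=\exp(-\gamma^\top\bm F)$, and $\bar\gamma$ is a fixed vector. $\psi$ is an increasing differentiable inverse link with derivative $\psi_1$. $D^\dagger_{\rm WL}(h,h';\gamma)=\tilde{\mathbb E}[Rw(\bm X;\gamma)\{\psi(h)-\psi(h')\}(h-h')]$. *)

From HB Require Import structures.
From mathcomp Require Import all_boot all_order all_algebra.
From mathcomp Require Import all_classical all_reals all_analysis.
Set Implicit Arguments. Unset Strict Implicit. Unset Printing Implicit Defensive.
Import Order.TTheory GRing.Theory Num.Theory.
Import numFieldNormedType.Exports.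
Local Open Scope ring_scope.

Definition Etilde (R : realType) (n : nat) (f : 'I_n -> R) : R :=
  n%:R^-1 * \sum_(i < n) f i.

Definition wgt (R : realType) (T : Type) (p : nat)
  (F : T -> 'cV[R]_p) (gamma : 'cV[R]_p) (x : T) : R :=
  expR (- ((gamma^T *m F x) 0 0)).

Definition D_WL (R : realType) (T : Type) (p n : nat)
  (X : 'I_n -> T) (Rv : 'I_n -> R) (F : T -> 'cV[R]_p) (psi : R -> R)
  (h h' : T -> R) (gamma : 'cV[R]_p) : R :=
  Etilde (fun i => Rv i * wgt F gamma (X i) *
                   (psi (h (X i)) - psi (h' (X i))) * (h (X i) - h' (X i))).

Definition linG (R : realType) (T : Type) (q : nat)
  (G : T -> 'cV[R]_(q.+1)) (alpha : 'cV[R]_(q.+1)) (x : T) : R :=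
  (alpha^T *m G x) 0 0.

Definition Sigma_tilde (R : realType) (T : Type) (p n q : nat)
  (X : 'I_n -> T) (Rv : 'I_n -> R) (F : T -> 'cV[R]_p) (psi1 : R -> R)
  (G : T -> 'cV[R]_(q.+1)) (gamma : 'cV[R]_p) (at_ : 'cV[R]_(q.+1))
  : 'M[R]_(q.+1) :=
  n%:R^-1 *: \sum_(i < n)
     ((Rv i * wgt F gamma (X i) * psi1 (linG G at_ (X i))) *:
        (G (X i) *m (G (X i))^T)).

Definition norm1 (R : realType) (m : nat) (b : 'cV[R]_m) : R :=
  \sum_(j < m) `|b j 0|.

Definition expfrac (R : realType) (c : R) : R :=
  if c == 0 then 1 else (1 - expR (- c)) / c.

(* With s := h - h' the difference of two linear predictors, the growth condition on psi1
   gives psi1 (h' + t) >= psi1 h' * exp (- c t) for t >= 0 and every rate c >= C3; comparing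
   psi (h' + .) with a primitive of exp (- c .) by the mean value theorem yields
   psi (h' + s) - psi h' >= psi1 h' * (1 - exp (- c s)) / c.  As |s| = |b^T G| <= C4 |b|_1,
   the rate c := C40 |b|_1 / s is admissible and turns the bound into
   psi1 h' * s * expfrac (C40 |b|_1); negative s reduce to positive ones through
   u |-> - psi (- u).  Multiplying by s and by the nonnegative weights R w(X; gbar) and
   averaging gives the quadratic form of Sigma_tilde. *)

From HB Require Import structures.
From mathcomp Require Import all_boot all_order all_algebra.
From mathcomp Require Import all_classical all_reals all_analysis.
From mathcomp Require Import ring lra.
Import Order.TTheory GRing.Theory Num.Theory.
Import numFieldNormedType.Exports.
Local Open Scope ring_scope.

(* [incr_derive1_ge0] needs strict monotonicity, hence the perturbation [f + e * id]. *)
Lemma nondecreasing_derive_ge0 {R : realType} {f f1 : R -> R} :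
  {homo f : u v / u <= v} -> (forall u : R, is_derive u 1 f (f1 u)) ->
  forall x, 0 <= f1 x.
Proof.
move=> f_nd df x; apply/ler_addgt0Pr => e e_gt0.
pose g := f \+ e *: id.
have dg (u : R) : is_derive u 1 g (f1 u + e).
  by apply: is_deriveD; rewrite -[X in is_derive _ _ _ X]mulr1; exact: is_deriveZ.
have : 0 <= derive1 g x.
  apply: (@incr_derive1_ge0 _ g setT); last by rewrite interiorT.
  - by move=> y _; have [] := dg y.
  - move=> u v _ _ uv; apply: ler_ltD; first exact/f_nd/ltW.
    by rewrite /= ltr_pM2l.
by rewrite derive1E (@derive_val _ _ _ _ _ _ _ (dg x)).
Qed.

Section increment_lower_bound.
Context {R : realType} {f f1 : R -> R} {C3 : R}.
Hypothesis df : forall u : R, is_derive u 1 f (f1 u).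
Hypothesis f1_ge0 : forall u : R, 0 <= f1 u.
Hypothesis f1_exp : forall u u', f1 u <= f1 u' * expR (C3 * `|u - u'|).

Lemma derive1_exp_lower (c a t : R) : C3 <= c -> 0 <= t ->
  f1 a * expR (- (c * t)) <= f1 (a + t).
Proof.
move=> C3c t_ge0.
have := f1_exp a (a + t); rewrite opprD addrA subrr add0r normrN ger0_norm //.
move=> /(ler_wpM2r (expR_ge0 (- (c * t)))) /le_trans; apply.
rewrite -mulrA -expRD -[leRHS]mulr1 ler_wpM2l // expR_le1.
by rewrite -mulNr -mulrDl mulr_le0_ge0 // subr_le0.
Qed.

Lemma increment_ge_primitive (c : R) (E : R -> R) (a s : R) :
  C3 <= c -> (forall t : R, is_derive t 1 E (expR (- (c * t)))) -> 0 <= s ->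
  f1 a * (E s - E 0) <= f (a + s) - f a.
Proof.
move=> C3c dE s_ge0.
pose phi t := f (a + t) - f1 a * E t.
have dphi (t : R) : is_derive t 1 phi (f1 (a + t) - f1 a * expR (- (c * t))).
  have -> : phi = f \o (fun y => a + y) - f1 a \*: E by apply/funext.
  apply: is_deriveB; have shift : is_derive t 1 (fun y : R => a + y) 1.
    by have := is_deriveD (is_derive_cst a t 1) (is_derive_id t 1); rewrite add0r.
  by have := is_derive1_comp (df (a + t)) shift; rewrite mulr1.
suff : 0 <= phi s - phi 0 by rewrite /phi addr0 => ?; lra.
have [|xi xi_in ->] := MVT_segment s_ge0 (fun x _ => dphi x).
  by apply: derivable_within_continuous => x _; have [] := dphi x.
have xi_ge0 : 0 <= xi by move: xi_in; rewrite in_itv /= => /andP[].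
by rewrite subr0 mulr_ge0 ?subr_ge0 ?derive1_exp_lower.
Qed.

Lemma increment_ge_expfrac (a s K : R) : 0 <= C3 -> 0 < s -> C3 * s <= K ->
  f1 a * s * expfrac K <= f (a + s) - f a.
Proof.
move=> C3_ge0 s_gt0 C3s_le; rewrite /expfrac.
have [K0|K_neq0] := eqVneq K 0.
  have C3_le0 : C3 <= 0 by rewrite -(pmulr_lle0 _ s_gt0) -K0.
  rewrite mulr1 -[s in f1 a * s]subr0.
  apply: (@increment_ge_primitive 0 id a s C3_le0 _ (ltW s_gt0)) => t.
  by rewrite mul0r oppr0 expR0; exact: is_derive_id.
have K_gt0 : 0 < K.
  by rewrite lt_def K_neq0 (le_trans _ C3s_le) // mulr_ge0 // ltW.
(* The rate [c = K / s >= C3] makes the primitive of [exp (- c t)] produce [s * expfrac K]. *)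
pose c := K / s.
have c_gt0 : 0 < c by rewrite divr_gt0.
have C3c : C3 <= c by rewrite ler_pdivlMr.
pose E t := - c^-1 * expR (- (c * t)).
have dE (t : R) : is_derive t 1 E (expR (- (c * t))).
  have dlin : is_derive t 1 (fun y : R => - (c * y)) (- c).
    by have := is_deriveN (is_deriveZ c (is_derive_id t 1)); rewrite /GRing.scale /= mulr1.
  apply: (is_derive_eq (is_deriveZ (- c^-1) (is_derive1_comp (is_derive_expR _) dlin))).
  by rewrite /GRing.scale /=; field; rewrite gt_eqF.
rewrite -mulrA; have -> : s * ((1 - expR (- K)) / K) = E s - E 0.
  rewrite /E mulr0 oppr0 expR0 (_ : c * s = K); last by rewrite divfK ?gt_eqF.
  by rewrite /c; field; rewrite !gt_eqF.
exact: (@increment_ge_primitive c E a s C3c dE (ltW s_gt0)).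
Qed.
End increment_lower_bound.

Lemma secant_ge_expfrac {R : realType} {f f1 : R -> R} {C3 : R} (a s K : R) :
  (forall u : R, is_derive u 1 f (f1 u)) -> (forall u : R, 0 <= f1 u) ->
  (forall u u' : R, f1 u <= f1 u' * expR (C3 * `|u - u'|)) ->
  0 <= C3 -> C3 * `|s| <= K ->
  f1 a * s ^+ 2 * expfrac K <= (f (a + s) - f a) * s.
Proof.
move=> df f1_ge0 f1_exp C3_ge0 C3s_le.
have [s_lt0|s_gt0|->] := ltgtP s 0; last by rewrite expr0n !mulr0 !mul0r.
- pose g u := - f (- u).
  have dg (u : R) : is_derive u 1 g (f1 (- u)).
    have dN : is_derive u 1 (fun y : R => - y) (-1) := is_deriveN (is_derive_id u 1).
    apply: (is_derive_eq (is_deriveN (is_derive1_comp (df (- u)) dN))).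
    by rewrite mulrN1 opprK.
  have g1_exp u u' : f1 (- u) <= f1 (- u') * expR (C3 * `|u - u'|).
    by have := f1_exp (- u) (- u'); rewrite -opprD normrN.
  have Ns_gt0 : 0 < - s by rewrite oppr_gt0.
  rewrite ltr0_norm // in C3s_le.
  have := increment_ge_expfrac dg (fun u => f1_ge0 (- u)) g1_exp (- a) (- s) K
    C3_ge0 Ns_gt0 C3s_le.
  rewrite /g opprD !opprK => /(ler_wpM2r (ltW Ns_gt0)).
  have -> : f1 a * s ^+ 2 * expfrac K = f1 a * - s * expfrac K * - s by ring.
  by have -> : (f (a + s) - f a) * s = (- f (a + s) + f a) * - s by ring.
- rewrite gtr0_norm // in C3s_le.
  have := increment_ge_expfrac df f1_ge0 f1_exp a s K C3_ge0 s_gt0 C3s_le.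
  move=> /(ler_wpM2r (ltW s_gt0)).
  by have -> : f1 a * s ^+ 2 * expfrac K = f1 a * s * expfrac K * s by ring.
Qed.

Lemma quad_form_sum_outer (R : comPzRingType) (m N : nat) (k : R) (w : 'I_N -> R)
    (g : 'I_N -> 'cV[R]_m) (b : 'cV[R]_m) :
  (b^T *m (k *: \sum_(i < N) (w i *: (g i *m (g i)^T))) *m b) 0 0
  = k * \sum_(i < N) w i * ((b^T *m g i) 0 0) ^+ 2.
Proof.
rewrite -scalemxAr -scalemxAl mxE mulmx_sumr mulmx_suml summxE; congr (_ * _).
apply: eq_bigr => i _; rewrite -scalemxAr -scalemxAl mxE; congr (_ * _).
rewrite !mulmxA -[_ *m b]mulmxA -{2}(trmxK b) -trmx_mul mxE big_ord1 mxE expr2.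
by rewrite mxE mxE.
Qed.

Lemma linGB (R : realType) (T : Type) (q : nat) (G : T -> 'cV[R]_q.+1)
    (alpha alpha' : 'cV[R]_q.+1) (x : T) :
  linG G (alpha - alpha') x = linG G alpha x - linG G alpha' x.
Proof. by rewrite /linG linearB /= mulmxBl !mxE. Qed.

Lemma norm_dot_le_norm1 (R : realType) (m : nat) (g b : 'cV[R]_m) (C : R) :
  (forall j, `|g j 0| <= C) -> `|(b^T *m g) 0 0| <= C * norm1 b.
Proof.
move=> g_le; rewrite mxE /norm1 mulr_sumr.
apply: (le_trans (ler_norm_sum _ _ _)); apply: ler_sum => j _.
by rewrite mxE normrM mulrC ler_wpM2r.
Qed.

Theorem lemmaS16 (R : realType) (T : Type) (p n q : nat)
  (X : 'I_n -> T) (Rv : 'I_n -> R)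
  (hR : forall i, Rv i = 0 \/ Rv i = 1)
  (F : T -> 'cV[R]_p) (G : T -> 'cV[R]_(q.+1)) (gbar : 'cV[R]_p)
  (psi psi1 : R -> R)
  (psi_incr : {homo psi : u v / u <= v})
  (psi_deriv : forall u : R, is_derive u 1 psi (psi1 u))
  (C3 C4 : R) (hC3 : 0 <= C3)
  (hpsi1 : forall u u' : R, psi1 u <= psi1 u' * expR (C3 * `|u - u'|))
  (hG : forall (i : 'I_n) (j : 'I_q.+1), `|G (X i) j 0| <= C4)
  (alpha alphat : 'cV[R]_(q.+1)) :
  let b := alpha - alphat in
  let C40 := C3 * C4 in
  D_WL X Rv F psi (linG G alpha) (linG G alphat) gbar >=
    (b^T *m Sigma_tilde X Rv F psi1 G gbar alphat *m b) 0 0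
    * expfrac (C40 * norm1 b).
Proof.
cbv zeta; set b := alpha - alphat; rewrite /Sigma_tilde quad_form_sum_outer /D_WL /Etilde.
rewrite -[_ * expfrac _]mulrA mulr_suml ler_wpM2l ?invr_ge0 ?ler0n //.
apply: ler_sum => i _.
set h := linG G alpha (X i); set h' := linG G alphat (X i).
have w_ge0 : 0 <= Rv i * wgt F gbar (X i).
  by rewrite mulr_ge0 ?expR_ge0 //; case: (hR i) => ->.
have C4_ge0 : 0 <= C4 := le_trans (normr_ge0 _) (hG i ord0).
have bG : (b^T *m G (X i)) 0 0 = h - h' by rewrite /h /h' -linGB.
have C3_le : C3 * `|h - h'| <= C3 * C4 * norm1 b.
  by rewrite -bG -mulrA ler_wpM2l // norm_dot_le_norm1.
have := secant_ge_expfrac h' (h - h') _ psi_deriv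
  (nondecreasing_derive_ge0 psi_incr psi_deriv) hpsi1 hC3 C3_le.
rewrite subrKC bG => /(ler_wpM2l w_ge0).
by rewrite !mulrA.
Qed.
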